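(* For each of the following five cases, and for all real parameters $\lambda\neq0$, $\mu\neq0$ and $k$, let $\mathfrak{g}$ be the $8$-dimensional Lie algebra with basis of one-forms $e^1,\dots,e^8$ whose differentials are as listed ($e^{ij}=e^i\wedge e^j$), equipped with the almost parahermitian structure with $V=\mathrm{span}(e_1,\dots,e_4)$, $H=\mathrm{span}(e_5,\dots,e_8)$, $F=\sum_{i=1}^4e^i\wedge e^{4+i}$, $g=\sum_{i=1}^4(e^i\otimes e^{4+i}+e^{4+i}\otimes e^i)$, $K=\mathrm{id}_V-\mathrm{id}_H$; here $\mathfrak{g}$ is isomorphic to $\mathfrak{h}\oplus\mathbb{R}$ with $\mathfrak{h}$ the listed $7$-dimensional nilpotent Lie algebra (given by $(de^1,\dots,de^7)$): (i) $\mathfrak{h}=(0,0,0,e^{12},e^{23}+e^{14},e^{24},e^{15}-e^{34})$; $\mathfrak{g}$: $(0,\,0,\,-\lambda e^{18},\,0,\,-\mu e^{23}+\lambda e^{78},\,\mu e^{13},\,-\mu e^{12}+\lambda\mu e^{38},\,0)$; (ii) $\mathfrak{h}=(0,0,0,e^{12},e^{23}+e^{14},e^{24}+e^{13},-e^{34}+e^{15})$; $\mathfrak{g}$: $(0,\,0,\,-\lambda e^{18},\,0,\,\lambda e^{78}-\mu e^{23},\,-\lambda\mu e^{28}+\mu e^{13},\,\lambda\mu e^{38}-\mu e^{12},\,0)$; (iii) $\mathfrak{h}=(0,0,e^{12},0,e^{24}+e^{13},e^{23},e^{34}+e^{15}+e^{26})$; $\mathfrak{g}$: $(0,\,-\lambda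 e^{18},\,0,\,0,\,\mu e^{23}+e^{17}+\lambda e^{68}-k\lambda e^{18},\,-\mu e^{13}+\lambda\mu e^{28},\,\mu e^{12},\,0)$; (iv) $\mathfrak{h}=(0,0,0,e^{12},e^{23}+e^{14},-e^{24}+e^{13},-e^{34}+e^{15})$; $\mathfrak{g}$: $(0,\,0,\,-\lambda e^{18},\,0,\,-\mu e^{23}+\lambda e^{78},\,\mu e^{13}+\lambda\mu e^{28},\,-\mu e^{12}+\lambda\mu e^{38},\,0)$; (v) $\mathfrak{h}=(0,0,e^{12},0,e^{13}+e^{24},e^{23},-e^{26}+e^{15}+e^{34})$; $\mathfrak{g}$: $(0,\,-\lambda e^{18},\,0,\,0,\,-e^{17}+\mu e^{23}+\lambda e^{68}+k\lambda e^{18},\,\lambda\mu e^{28}-\mu e^{13},\,\mu e^{12},\,0)$. Then in each case the (left-invariant) structure is nearly parak\''ahler, its intrinsic torsion component $\tau_1$ is nonzero, its metric is Ricci-flat, and its curvature is nonzero (not flat).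
   Context: A tuple $(\sigma_1,\dots,\sigma_m)$ describes a Lie algebra with a basis $e^1,\dots,e^m$ of the dual such that $de^i=\sigma_i$, where $d$ is the Chevalley--Eilenberg differential ($d\xi(X,Y)=-\xi([X,Y])$), and $(e_i)$ is the dual basis. The structure is nearly parak\''ahler if $(\nabla_XK)X=0$ for all $X$, where $\nabla$ is the Levi-Civita connection of $g$. The condition $\tau_1\neq0$ means that the $\Lambda^3V^*$-component of the intrinsic torsion is nonzero, equivalently $(dF)^{3,0}\neq0$, where $(dF)^{3,0}$ is the component of $dF$ in $\Lambda^3\mathrm{span}(e^1,\dots,e^4)$. *)

From HB Require Import structures.
From mathcomp Require Import all_boot all_order all_algebra.
From mathcomp Require Import reals.
Set Implicit Arguments. Unset Strict Implicit. Unset Printing Implicit Defensive.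
Import Order.TTheory GRing.Theory Num.Theory.
Local Open Scope ring_scope.

Section Defs.
Variable R : realType.

(* Elements of g are row vectors of coordinates in the basis e_1..e_8
   (index 0..7 in Rocq = 1..8 in the paper). *)
Notation vec := 'rV[R]_8.

(* A 2-form w on g is stored as its (antisymmetric) matrix: w(X,Y) = X w Y^T. *)
Definition ev2 (w : 'M[R]_8) (X Y : vec) : R := (X *m w *m Y^T) 0 0.

(* e^{ij} = e^i /\ e^j (1-based indices), with (a/\b)(X,Y) = a(X)b(Y)-a(Y)b(X). *)
Definition ee (i j : nat) : 'M[R]_8 :=
  delta_mx (@inord 7 i.-1) (@inord 7 j.-1) - delta_mx (@inord 7 j.-1) (@inord 7 i.-1).

Definition tuple8 (l : seq 'M[R]_8) : 'I_8 -> 'M[R]_8 := fun k => nth 0 l k.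

(* Bracket determined by de^k = sigma_k and d xi(X,Y) = - xi([X,Y]):
   the k-th coordinate of [X,Y] is - sigma_k(X,Y). *)
Definition lie (s : 'I_8 -> 'M[R]_8) (X Y : vec) : vec :=
  \row_k (- ev2 (s k) X Y).

Definition is_lie_algebra (s : 'I_8 -> 'M[R]_8) : Prop :=
  (forall X Y, lie s X Y = - lie s Y X) /\
  (forall X Y Z, lie s (lie s X Y) Z + lie s (lie s Y Z) X + lie s (lie s Z X) Y = 0).

Definition lie_isomorphic (s1 s2 : 'I_8 -> 'M[R]_8) : Prop :=
  exists P : 'M[R]_8, P \in unitmx /\
    forall X Y, lie s2 (X *m P) (Y *m P) = lie s1 X Y *m P.

Definition swap4 (i : 'I_8) : 'I_8 := inord ((i + 4) %% 8).
(* g = sum_i (e^i (x) e^{4+i} + e^{4+i} (x) e^i) *)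
Definition gmx : 'M[R]_8 := \matrix_(i, j) (j == swap4 i)%:R.
Definition gmet (X Y : vec) : R := ev2 gmx X Y.
Definition Fform : 'M[R]_8 := \sum_(i < 4) ee i.+1 (i + 5)%N.
(* K = id_V - id_H, V = span(e_1..e_4), H = span(e_5..e_8); acts by X |-> X *m Kmx *)
Definition Kmx : 'M[R]_8 := \matrix_(i, j) (if i == j then (if (i < 4)%N then 1 else -1) else 0).
Definition projV : 'M[R]_8 := \matrix_(i, j) (if i == j then (if (i < 4)%N then 1 else 0) else 0).

(* Levi-Civita connection of gmet on left-invariant fields, by the Koszul
   formula 2 g(nabla_X Y, Z) = g([X,Y],Z) - g([Y,Z],X) + g([Z,X],Y). *)
Definition koszul s (X Y Z : vec) : R :=
  (gmet (lie s X Y) Z - gmet (lie s Y Z) X + gmet (lie s Z X) Y) / 2.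
Definition nabla s (X Y : vec) : vec :=
  (\row_j koszul s X Y (delta_mx 0 j)) *m invmx gmx.

Definition nablaK s (X Y : vec) : vec := nabla s X (Y *m Kmx) - nabla s X Y *m Kmx.
Definition nearly_parakahler s : Prop := forall X : vec, nablaK s X X = 0.

Definition curv s (X Y Z : vec) : vec :=
  nabla s X (nabla s Y Z) - nabla s Y (nabla s X Z) - nabla s (lie s X Y) Z.
Definition flat s : Prop := forall X Y Z, curv s X Y Z = 0.
Definition ricci s (X Y : vec) : R :=
  \tr (\matrix_(i, j) (curv s (delta_mx 0 i) X Y) 0 j).
Definition ricci_flat s : Prop := forall X Y, ricci s X Y = 0.

Definition d2 s (w : 'M[R]_8) (X Y Z : vec) : R :=
  - ev2 w (lie s X Y) Z + ev2 w (lie s X Z) Y - ev2 w (lie s Y Z) X.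
(* (dF)^{3,0}: the component of dF in Lambda^3 span(e^1..e^4) *)
Definition dF30 s (X Y Z : vec) : R := d2 s Fform (X *m projV) (Y *m projV) (Z *m projV).
Definition tau1_nonzero s : Prop := exists X Y Z, dF30 s X Y Z != 0.

Definition conclusion (s h : 'I_8 -> 'M[R]_8) : Prop :=
  is_lie_algebra s /\ lie_isomorphic s h /\ nearly_parakahler s /\
  tau1_nonzero s /\ ricci_flat s /\ ~ flat s.

Definition hplusR (l : seq 'M[R]_8) : 'I_8 -> 'M[R]_8 := tuple8 (l ++ [:: 0]).

Definition h_i : 'I_8 -> 'M[R]_8 := hplusR
  [:: 0; 0; 0; ee 1 2; ee 2 3 + ee 1 4; ee 2 4; ee 1 5 - ee 3 4].
Definition h_ii : 'I_8 -> 'M[R]_8 := hplusR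
  [:: 0; 0; 0; ee 1 2; ee 2 3 + ee 1 4; ee 2 4 + ee 1 3; - ee 3 4 + ee 1 5].
Definition h_iii : 'I_8 -> 'M[R]_8 := hplusR
  [:: 0; 0; ee 1 2; 0; ee 2 4 + ee 1 3; ee 2 3; ee 3 4 + ee 1 5 + ee 2 6].
Definition h_iv : 'I_8 -> 'M[R]_8 := hplusR
  [:: 0; 0; 0; ee 1 2; ee 2 3 + ee 1 4; - ee 2 4 + ee 1 3; - ee 3 4 + ee 1 5].
Definition h_v : 'I_8 -> 'M[R]_8 := hplusR
  [:: 0; 0; ee 1 2; 0; ee 1 3 + ee 2 4; ee 2 3; - ee 2 6 + ee 1 5 + ee 3 4].

Definition g_i (l m : R) : 'I_8 -> 'M[R]_8 := tuple8
  [:: 0; 0; - (l *: ee 1 8); 0; - (m *: ee 2 3) + l *: ee 7 8; m *: ee 1 3;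
      - (m *: ee 1 2) + (l * m) *: ee 3 8; 0].
Definition g_ii (l m : R) : 'I_8 -> 'M[R]_8 := tuple8
  [:: 0; 0; - (l *: ee 1 8); 0; l *: ee 7 8 - m *: ee 2 3;
      - ((l * m) *: ee 2 8) + m *: ee 1 3; (l * m) *: ee 3 8 - m *: ee 1 2; 0].
Definition g_iii (l m k : R) : 'I_8 -> 'M[R]_8 := tuple8
  [:: 0; - (l *: ee 1 8); 0; 0;
      m *: ee 2 3 + ee 1 7 + l *: ee 6 8 - (k * l) *: ee 1 8;
      - (m *: ee 1 3) + (l * m) *: ee 2 8; m *: ee 1 2; 0].
Definition g_iv (l m : R) : 'I_8 -> 'M[R]_8 := tuple8
  [:: 0; 0; - (l *: ee 1 8); 0; - (m *: ee 2 3) + l *: ee 7 8;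
      m *: ee 1 3 + (l * m) *: ee 2 8; - (m *: ee 1 2) + (l * m) *: ee 3 8; 0].
Definition g_v (l m k : R) : 'I_8 -> 'M[R]_8 := tuple8
  [:: 0; - (l *: ee 1 8); 0; 0;
      - ee 1 7 + m *: ee 2 3 + l *: ee 6 8 + (k * l) *: ee 1 8;
      (l * m) *: ee 2 8 - m *: ee 1 3; m *: ee 1 2; 0].

End Defs.

From HB Require Import structures.
From mathcomp Require Import all_boot all_order all_algebra.
From mathcomp Require Import reals.
From mathcomp Require Import ring.
Set Implicit Arguments. Unset Strict Implicit. Unset Printing Implicit Defensive.
Import Order.TTheory GRing.Theory Num.Theory.
Local Open Scope ring_scope.

(* Cases (i), (ii), (iv) are the members c = 0, -1, 1 of one family gA(lambda, mu, c),
   and cases (iii), (v) the members (a, b) = (1, -k lambda), (-1, k lambda) of a family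
   gB(lambda, mu, a, b); all properties but the isomorphism type hold on the whole
   family.  In coordinates the Koszul formula gives the Levi-Civita connection as an
   explicit bilinear map, after which being nearly parakahler, Ricci-flatness,
   (dF)^{3,0}(e_1, e_2, e_3) = +-3 mu and the e_4-component -lambda^2 mu of
   R(e_1, e_8) e_3 (resp. R(e_1, e_8) e_2) are polynomial identities.  The isomorphism
   with h (+) R is a rescaled permutation of the basis, with one extra shear term in
   cases (iii) and (v). *)

Section Coordinates.
Variable R : realType.
Notation vec := 'rV[R]_8.

Definition row8 (a0 a1 a2 a3 a4 a5 a6 a7 : R) : vec :=
  \row_k nth 0 [:: a0; a1; a2; a3; a4; a5; a6; a7] k.

Lemma ord8_ind (P : 'I_8 -> Prop) :
  P (inord 0) -> P (inord 1) -> P (inord 2) -> P (inord 3) ->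
  P (inord 4) -> P (inord 5) -> P (inord 6) -> P (inord 7) -> forall i, P i.
Proof.
move=> P0 P1 P2 P3 P4 P5 P6 P7 i; rewrite -[i]inord_val.
by case: i => [[|[|[|[|[|[|[|[|n]]]]]]]] ?].
Qed.

Lemma row8E a0 a1 a2 a3 a4 a5 a6 a7 n : (n < 8)%N ->
  row8 a0 a1 a2 a3 a4 a5 a6 a7 0 (inord n) = nth 0 [:: a0; a1; a2; a3; a4; a5; a6; a7] n.
Proof. by move=> n_lt8; rewrite mxE inordK. Qed.

Lemma row8_fun (f : 'I_8 -> R) : \row_i f i =
  row8 (f (inord 0)) (f (inord 1)) (f (inord 2)) (f (inord 3))
       (f (inord 4)) (f (inord 5)) (f (inord 6)) (f (inord 7)).
Proof. by apply/rowP; apply: ord8_ind; rewrite row8E // mxE. Qed.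

Lemma row8_eta (X : vec) : X =
  row8 (X 0 (inord 0)) (X 0 (inord 1)) (X 0 (inord 2)) (X 0 (inord 3))
       (X 0 (inord 4)) (X 0 (inord 5)) (X 0 (inord 6)) (X 0 (inord 7)).
Proof. by rewrite -row8_fun; apply/rowP => i; rewrite mxE. Qed.

Lemma row8_delta n : (n < 8)%N -> delta_mx 0 (@inord 7 n) =
  row8 (n == 0)%:R (n == 1)%:R (n == 2)%:R (n == 3)%:R
       (n == 4)%:R (n == 5)%:R (n == 6)%:R (n == 7)%:R.
Proof.
move=> n_lt8; apply/rowP; apply: ord8_ind;
  by rewrite row8E // !mxE /= -(inj_eq val_inj) /= !inordK // eq_sym.
Qed.

Lemma big_ord8 (F : 'I_8 -> R) : \sum_(i < 8) F i =
  F (inord 0) + F (inord 1) + F (inord 2) + F (inord 3) +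
  F (inord 4) + F (inord 5) + F (inord 6) + F (inord 7).
Proof.
rewrite !big_ord_recl big_ord0 addr0 !addrA.
by repeat congr (_ + _); congr F; apply/val_inj; rewrite /= inordK.
Qed.

Lemma row8D a0 a1 a2 a3 a4 a5 a6 a7 b0 b1 b2 b3 b4 b5 b6 b7 :
  row8 a0 a1 a2 a3 a4 a5 a6 a7 + row8 b0 b1 b2 b3 b4 b5 b6 b7 =
  row8 (a0 + b0) (a1 + b1) (a2 + b2) (a3 + b3) (a4 + b4) (a5 + b5) (a6 + b6) (a7 + b7).
Proof. by apply/rowP; apply: ord8_ind; rewrite /row8 !mxE !inordK. Qed.

Lemma row8N a0 a1 a2 a3 a4 a5 a6 a7 :
  - row8 a0 a1 a2 a3 a4 a5 a6 a7 = row8 (- a0) (- a1) (- a2) (- a3) (- a4) (- a5) (- a6) (- a7).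
Proof. by apply/rowP; apply: ord8_ind; rewrite /row8 !mxE !inordK. Qed.

Lemma row8B a0 a1 a2 a3 a4 a5 a6 a7 b0 b1 b2 b3 b4 b5 b6 b7 :
  row8 a0 a1 a2 a3 a4 a5 a6 a7 - row8 b0 b1 b2 b3 b4 b5 b6 b7 =
  row8 (a0 - b0) (a1 - b1) (a2 - b2) (a3 - b3) (a4 - b4) (a5 - b5) (a6 - b6) (a7 - b7).
Proof. by rewrite row8N row8D. Qed.

Lemma row80 : 0 = row8 0 0 0 0 0 0 0 0.
Proof. by apply/rowP; apply: ord8_ind; rewrite /row8 !mxE !inordK. Qed.

Definition mx8 (rs : seq (seq R)) : 'M[R]_8 := \matrix_(i, j) nth 0 (nth [::] rs i) j.

Definition mx8_coord (rs : seq (seq R)) x0 x1 x2 x3 x4 x5 x6 x7 (j : nat) : R :=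
  let r i := nth 0 (nth [::] rs i) j in
  x0 * r 0 + x1 * r 1 + x2 * r 2 + x3 * r 3 + x4 * r 4 + x5 * r 5 + x6 * r 6 + x7 * r 7.

Lemma mul_row8_mx8 rs x0 x1 x2 x3 x4 x5 x6 x7 :
  row8 x0 x1 x2 x3 x4 x5 x6 x7 *m mx8 rs =
  row8 (mx8_coord rs x0 x1 x2 x3 x4 x5 x6 x7 0) (mx8_coord rs x0 x1 x2 x3 x4 x5 x6 x7 1)
       (mx8_coord rs x0 x1 x2 x3 x4 x5 x6 x7 2) (mx8_coord rs x0 x1 x2 x3 x4 x5 x6 x7 3)
       (mx8_coord rs x0 x1 x2 x3 x4 x5 x6 x7 4) (mx8_coord rs x0 x1 x2 x3 x4 x5 x6 x7 5)
       (mx8_coord rs x0 x1 x2 x3 x4 x5 x6 x7 6) (mx8_coord rs x0 x1 x2 x3 x4 x5 x6 x7 7).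
Proof. by apply/rowP; apply: ord8_ind; rewrite row8E // mxE big_ord8 /mx8 /row8 !mxE !inordK. Qed.

Lemma ev2D (w1 w2 : 'M[R]_8) (X Y : vec) : ev2 (w1 + w2) X Y = ev2 w1 X Y + ev2 w2 X Y.
Proof. by rewrite /ev2 mulmxDr mulmxDl mxE. Qed.

Lemma ev2N (w : 'M[R]_8) (X Y : vec) : ev2 (- w) X Y = - ev2 w X Y.
Proof. by rewrite /ev2 mulmxN mulNmx mxE. Qed.

Lemma ev2B (w1 w2 : 'M[R]_8) (X Y : vec) : ev2 (w1 - w2) X Y = ev2 w1 X Y - ev2 w2 X Y.
Proof. by rewrite ev2D ev2N. Qed.

Lemma ev2Z a (w : 'M[R]_8) (X Y : vec) : ev2 (a *: w) X Y = a * ev2 w X Y.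
Proof. by rewrite /ev2 -scalemxAr -scalemxAl mxE. Qed.

Lemma ev20 (X Y : vec) : ev2 (0 : 'M[R]_8) X Y = 0.
Proof. by rewrite /ev2 mulmx0 mul0mx mxE. Qed.

Lemma ev2_delta (i j : 'I_8) (X Y : vec) : ev2 (delta_mx i j) X Y = X 0 i * Y 0 j.
Proof.
rewrite /ev2 mxE (bigD1 j) //= big1 ?addr0 => [|k /negbTE k_neq_j].
  rewrite !mxE (bigD1 i) //= big1 ?addr0 => [|k /negbTE k_neq_i].
    by rewrite !mxE !eqxx mulr1.
  by rewrite !mxE k_neq_i mulr0.
by rewrite !mxE big1 ?mul0r // => k' _; rewrite !mxE k_neq_j andbF mulr0.
Qed.

Lemma ev2_ee p q (X Y : vec) : ev2 (ee R p q) X Y =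
  X 0 (inord p.-1) * Y 0 (inord q.-1) - X 0 (inord q.-1) * Y 0 (inord p.-1).
Proof. by rewrite /ee ev2B !ev2_delta. Qed.

Lemma FformE : Fform R = ee R 1 5 + ee R 2 6 + ee R 3 7 + ee R 4 8.
Proof. by rewrite /Fform !big_ord_recl big_ord0 addr0 !addrA. Qed.

Lemma inord_eq8 n p : (n < 8)%N -> (p < 8)%N -> (@inord 7 n == inord p) = (n == p).
Proof. by move=> n_lt8 p_lt8; rewrite -(inj_eq val_inj) /= !inordK. Qed.

Lemma mul_row8_gmx a0 a1 a2 a3 a4 a5 a6 a7 :
  row8 a0 a1 a2 a3 a4 a5 a6 a7 *m gmx R = row8 a4 a5 a6 a7 a0 a1 a2 a3.
Proof.
apply/rowP; apply: ord8_ind;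
  rewrite row8E // mxE big_ord8 /gmx !mxE /swap4 !inordK //= !inord_eq8 //=; ring.
Qed.

Lemma mul_row8_Kmx a0 a1 a2 a3 a4 a5 a6 a7 :
  row8 a0 a1 a2 a3 a4 a5 a6 a7 *m Kmx R = row8 a0 a1 a2 a3 (- a4) (- a5) (- a6) (- a7).
Proof.
apply/rowP; apply: ord8_ind;
  rewrite row8E // mxE big_ord8 /Kmx !mxE !inordK //= !inord_eq8 //=; ring.
Qed.

Lemma mul_row8_projV a0 a1 a2 a3 a4 a5 a6 a7 :
  row8 a0 a1 a2 a3 a4 a5 a6 a7 *m projV R = row8 a0 a1 a2 a3 0 0 0 0.
Proof.
apply/rowP; apply: ord8_ind;
  rewrite row8E // mxE big_ord8 /projV !mxE !inordK //= !inord_eq8 //=; ring.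
Qed.

Lemma gmx_invol : gmx R *m gmx R = 1%:M.
Proof.
apply/row_matrixP; apply: ord8_ind;
  by rewrite !rowE mulmxA mulmx1 row8_delta // !mul_row8_gmx.
Qed.

Lemma invmx_gmx : invmx (gmx R) = gmx R.
Proof.
have [gmx_unit _] := mulmx1_unit gmx_invol.
by rewrite -[invmx _]mulmx1 -gmx_invol mulmxA mulVmx // mul1mx.
Qed.

Lemma gmetE a0 a1 a2 a3 a4 a5 a6 a7 b0 b1 b2 b3 b4 b5 b6 b7 :
  gmet (row8 a0 a1 a2 a3 a4 a5 a6 a7) (row8 b0 b1 b2 b3 b4 b5 b6 b7) =
  a0 * b4 + a1 * b5 + a2 * b6 + a3 * b7 + a4 * b0 + a5 * b1 + a6 * b2 + a7 * b3.
Proof. by rewrite /gmet /ev2 mul_row8_gmx mxE big_ord8 !mxE !inordK //=; ring. Qed.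

(* g pairs e_i with e_{i+4}, so the i-th coordinate of nabla_X Y is the Koszul
   expression tested on e_{i+4}. *)
Lemma nablaE s (X Y : vec) : nabla s X Y =
  row8 (koszul s X Y (row8 0 0 0 0 1 0 0 0)) (koszul s X Y (row8 0 0 0 0 0 1 0 0))
       (koszul s X Y (row8 0 0 0 0 0 0 1 0)) (koszul s X Y (row8 0 0 0 0 0 0 0 1))
       (koszul s X Y (row8 1 0 0 0 0 0 0 0)) (koszul s X Y (row8 0 1 0 0 0 0 0 0))
       (koszul s X Y (row8 0 0 1 0 0 0 0 0)) (koszul s X Y (row8 0 0 0 1 0 0 0 0)).
Proof. by rewrite /nabla invmx_gmx row8_fun !row8_delta // mul_row8_gmx. Qed.

Lemma ricciE s (X Y : vec) : ricci s X Y = \sum_(i < 8) curv s (delta_mx 0 i) X Y 0 i.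
Proof. by rewrite /ricci /mxtrace; apply: eq_bigr => i _; rewrite mxE. Qed.

End Coordinates.

Ltac lie_coords :=
  apply/rowP; apply: ord8_ind;
  rewrite row8E // mxE /tuple8 inordK //= ?ev2D ?ev2B ?ev2N ?ev2Z ?ev20 ?ev2_ee ?ev2_delta /= ?row8E //=;
  ring.

Section FamilyA.
Variables (R : realType) (l m c : R).

Definition gA : 'I_8 -> 'M[R]_8 := tuple8
  [:: 0; 0; - (l *: ee R 1 8); 0; - (m *: ee R 2 3) + l *: ee R 7 8;
      m *: ee R 1 3 + (c * l * m) *: ee R 2 8; - (m *: ee R 1 2) + (l * m) *: ee R 3 8; 0].

Lemma lie_gA x0 x1 x2 x3 x4 x5 x6 x7 y0 y1 y2 y3 y4 y5 y6 y7 :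
  lie gA (row8 x0 x1 x2 x3 x4 x5 x6 x7) (row8 y0 y1 y2 y3 y4 y5 y6 y7) =
  row8 0 0 (l * (x0 * y7 - x7 * y0)) 0
       (m * (x1 * y2 - x2 * y1) - l * (x6 * y7 - x7 * y6))
       (m * (x2 * y0 - x0 * y2) - c * l * m * (x1 * y7 - x7 * y1))
       (m * (x0 * y1 - x1 * y0) - l * m * (x2 * y7 - x7 * y2)) 0.
Proof. rewrite /gA; lie_coords. Qed.

Lemma nabla_gA x0 x1 x2 x3 x4 x5 x6 x7 y0 y1 y2 y3 y4 y5 y6 y7 :
  nabla gA (row8 x0 x1 x2 x3 x4 x5 x6 x7) (row8 y0 y1 y2 y3 y4 y5 y6 y7) =
  row8 0 0 (- l * x7 * y0) (l * m * (c * x1 * y1 + x2 * y2))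
       (l * x7 * y6 + m / 2 * (x1 * y2 - x2 * y1))
       (m / 2 * (x2 * y0 - x0 * y2) - c * l * m * x1 * y7)
       (m / 2 * (x0 * y1 - x1 * y0) - l * m * x2 * y7) 0.
Proof. by rewrite nablaE /koszul !lie_gA !gmetE; congr row8; field. Qed.

Lemma gA_lie_algebra : is_lie_algebra gA.
Proof.
split=> [X Y | X Y Z].
  by rewrite (row8_eta X) (row8_eta Y) !lie_gA row8N; congr row8; ring.
rewrite (row8_eta X) (row8_eta Y) (row8_eta Z) !lie_gA !row8D row80.
by congr row8; ring.
Qed.

Lemma gA_nearly_parakahler : nearly_parakahler gA.
Proof.
move=> X; rewrite (row8_eta X) /nablaK mul_row8_Kmx !nabla_gA mul_row8_Kmx row8B row80.
by congr row8; ring.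
Qed.

Lemma dF30_gA : dF30 gA (row8 1 0 0 0 0 0 0 0) (row8 0 1 0 0 0 0 0 0) (row8 0 0 1 0 0 0 0 0) = 3 * m.
Proof.
by rewrite /dF30 !mul_row8_projV /d2 !lie_gA FformE !ev2D !ev2N !ev2_delta !row8E //=; ring.
Qed.

Lemma gA_ricci_flat : ricci_flat gA.
Proof.
move=> X Y; rewrite (row8_eta X) (row8_eta Y) ricciE big_ord8 !row8_delta // /curv.
do 3 rewrite ?lie_gA ?nabla_gA.
by rewrite !row8B !row8E //=; ring.
Qed.

Lemma curv_gA_e1_e8_e3 : curv gA (row8 1 0 0 0 0 0 0 0) (row8 0 0 0 0 0 0 0 1) (row8 0 0 1 0 0 0 0 0) 0 (inord 3)
  = - (l ^+ 2 * m).
Proof. by rewrite /curv; do 3 rewrite ?lie_gA ?nabla_gA; rewrite !row8B row8E //=; ring. Qed.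

Hypotheses (l_neq0 : l != 0) (m_neq0 : m != 0).

Lemma gA_tau1_nonzero : tau1_nonzero gA.
Proof.
exists (row8 1 0 0 0 0 0 0 0), (row8 0 1 0 0 0 0 0 0), (row8 0 0 1 0 0 0 0 0).
by rewrite dF30_gA mulf_neq0 // pnatr_eq0.
Qed.

Lemma gA_not_flat : ~ flat gA.
Proof.
move=> gA_flat; have := curv_gA_e1_e8_e3; rewrite gA_flat mxE => /esym/eqP.
by rewrite oppr_eq0 mulf_eq0 expf_eq0 /= (negbTE l_neq0) (negbTE m_neq0).
Qed.

Lemma gA_conclusion h : lie_isomorphic gA h -> conclusion gA h.
Proof.
move=> gA_iso_h.
exact: (conj gA_lie_algebra (conj gA_iso_h (conj gA_nearly_parakahler
         (conj gA_tau1_nonzero (conj gA_ricci_flat gA_not_flat))))).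
Qed.

End FamilyA.

Section FamilyB.
Variables (R : realType) (l m a b : R).

Definition gB : 'I_8 -> 'M[R]_8 := tuple8
  [:: 0; - (l *: ee R 1 8); 0; 0; m *: ee R 2 3 + a *: ee R 1 7 + l *: ee R 6 8 + b *: ee R 1 8;
      - (m *: ee R 1 3) + (l * m) *: ee R 2 8; m *: ee R 1 2; 0].

Lemma lie_gB x0 x1 x2 x3 x4 x5 x6 x7 y0 y1 y2 y3 y4 y5 y6 y7 :
  lie gB (row8 x0 x1 x2 x3 x4 x5 x6 x7) (row8 y0 y1 y2 y3 y4 y5 y6 y7) =
  row8 0 (l * (x0 * y7 - x7 * y0)) 0 0
       (m * (x2 * y1 - x1 * y2) + a * (x6 * y0 - x0 * y6) + l * (x7 * y5 - x5 * y7)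
          + b * (x7 * y0 - x0 * y7))
       (m * (x0 * y2 - x2 * y0) - l * m * (x1 * y7 - x7 * y1))
       (m * (x1 * y0 - x0 * y1)) 0.
Proof. rewrite /gB; lie_coords. Qed.

Lemma nabla_gB x0 x1 x2 x3 x4 x5 x6 x7 y0 y1 y2 y3 y4 y5 y6 y7 :
  nabla gB (row8 x0 x1 x2 x3 x4 x5 x6 x7) (row8 y0 y1 y2 y3 y4 y5 y6 y7) =
  row8 0 (- l * x7 * y0) (a * x0 * y0) (b * x0 * y0 + l * m * x1 * y1)
       (l * x7 * y5 + m / 2 * (x2 * y1 - x1 * y2) - a * x0 * y6 - b * x0 * y7)
       (m / 2 * (x0 * y2 - x2 * y0) - l * m * x1 * y7)
       (m / 2 * (x1 * y0 - x0 * y1)) 0.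
Proof. by rewrite nablaE /koszul !lie_gB !gmetE; congr row8; field. Qed.

Lemma gB_lie_algebra : is_lie_algebra gB.
Proof.
split=> [X Y | X Y Z].
  by rewrite (row8_eta X) (row8_eta Y) !lie_gB row8N; congr row8; ring.
rewrite (row8_eta X) (row8_eta Y) (row8_eta Z) !lie_gB !row8D row80.
by congr row8; ring.
Qed.

Lemma gB_nearly_parakahler : nearly_parakahler gB.
Proof.
move=> X; rewrite (row8_eta X) /nablaK mul_row8_Kmx !nabla_gB mul_row8_Kmx row8B row80.
by congr row8; ring.
Qed.

Lemma dF30_gB : dF30 gB (row8 1 0 0 0 0 0 0 0) (row8 0 1 0 0 0 0 0 0) (row8 0 0 1 0 0 0 0 0) = - (3 * m).
Proof.
by rewrite /dF30 !mul_row8_projV /d2 !lie_gB FformE !ev2D !ev2N !ev2_delta !row8E //=; ring.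
Qed.

Lemma gB_ricci_flat : ricci_flat gB.
Proof.
move=> X Y; rewrite (row8_eta X) (row8_eta Y) ricciE big_ord8 !row8_delta // /curv.
do 3 rewrite ?lie_gB ?nabla_gB.
by rewrite !row8B !row8E //=; ring.
Qed.

Lemma curv_gB_e1_e8_e2 : curv gB (row8 1 0 0 0 0 0 0 0) (row8 0 0 0 0 0 0 0 1) (row8 0 1 0 0 0 0 0 0) 0 (inord 3)
  = - (l ^+ 2 * m).
Proof. by rewrite /curv; do 3 rewrite ?lie_gB ?nabla_gB; rewrite !row8B row8E //=; ring. Qed.

Hypotheses (l_neq0 : l != 0) (m_neq0 : m != 0).

Lemma gB_tau1_nonzero : tau1_nonzero gB.
Proof.
exists (row8 1 0 0 0 0 0 0 0), (row8 0 1 0 0 0 0 0 0), (row8 0 0 1 0 0 0 0 0).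
by rewrite dF30_gB oppr_eq0 mulf_neq0 // pnatr_eq0.
Qed.

Lemma gB_not_flat : ~ flat gB.
Proof.
move=> gB_flat; have := curv_gB_e1_e8_e2; rewrite gB_flat mxE => /esym/eqP.
by rewrite oppr_eq0 mulf_eq0 expf_eq0 /= (negbTE l_neq0) (negbTE m_neq0).
Qed.

Lemma gB_conclusion h : lie_isomorphic gB h -> conclusion gB h.
Proof.
move=> gB_iso_h.
exact: (conj gB_lie_algebra (conj gB_iso_h (conj gB_nearly_parakahler
         (conj gB_tau1_nonzero (conj gB_ricci_flat gB_not_flat))))).
Qed.

End FamilyB.

Section Family_members.
Variables (R : realType) (l m k : R).

Lemma g_iE : g_i l m = gA l m 0.
Proof. by rewrite /g_i /gA !mul0r scale0r addr0. Qed.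

Lemma g_iiE : g_ii l m = gA l m (-1).
Proof.
rewrite /g_ii /gA mulN1r mulNr scaleNr.
by congr (tuple8 [:: _; _; _; _; _; _; _; _]); rewrite addrC.
Qed.

Lemma g_ivE : g_iv l m = gA l m 1.
Proof. by rewrite /g_iv /gA mul1r. Qed.

Lemma g_iiiE : g_iii l m k = gB l m 1 (- (k * l)).
Proof. by rewrite /g_iii /gB scale1r scaleNr. Qed.

Lemma g_vE : g_v l m k = gB l m (-1) (k * l).
Proof.
rewrite /g_v /gB scaleN1r.
by congr (tuple8 [:: _; _; _; _; _; _; _; _]); [rewrite [- _ + _]addrC | rewrite addrC].
Qed.

End Family_members.

Ltac mx8_mul_inverse :=
  apply/row_matrixP; apply: ord8_ind;
  rewrite !rowE mulmxA mulmx1 row8_delta // !mul_row8_mx8 /mx8_coord /=;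
  congr row8; field; by rewrite ?mulf_neq0 ?expf_neq0 //; apply/andP.

Ltac mx8_lie_morph lie_s :=
  let X := fresh "X" in let Y := fresh "Y" in
  move=> X Y; rewrite (row8_eta X) (row8_eta Y) !mul_row8_mx8 lie_s mul_row8_mx8 /mx8_coord /=;
  lie_coords.

Section Isomorphisms.
Variables (R : realType) (l m k : R).
Hypotheses (l_neq0 : l != 0) (m_neq0 : m != 0).

Definition P_i : 'M[R]_8 := mx8
  [:: [:: 0; m; 0; 0; 0; 0; 0; 0];
      [:: 0; 0; 1; 0; 0; 0; 0; 0];
      [:: 0; 0; 0; m; 0; 0; 0; 0];
      [:: 0; 0; 0; 0; 0; 0; 0; 1];
      [:: 0; 0; 0; 0; 0; 0; 1; 0];
      [:: 0; 0; 0; 0; 0; m; 0; 0];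
      [:: 0; 0; 0; 0; - 1; 0; 0; 0];
      [:: l; 0; 0; 0; 0; 0; 0; 0]].

Lemma P_i_unit : P_i \in unitmx.
Proof.
suff : P_i *m mx8
  [:: [:: 0; 0; 0; 0; 0; 0; 0; l^-1];
      [:: m^-1; 0; 0; 0; 0; 0; 0; 0];
      [:: 0; 1; 0; 0; 0; 0; 0; 0];
      [:: 0; 0; m^-1; 0; 0; 0; 0; 0];
      [:: 0; 0; 0; 0; 0; 0; -1; 0];
      [:: 0; 0; 0; 0; 0; m^-1; 0; 0];
      [:: 0; 0; 0; 0; 1; 0; 0; 0];
      [:: 0; 0; 0; 1; 0; 0; 0; 0]] = 1%:M by case/mulmx1_unit.
mx8_mul_inverse.
Qed.

Lemma gA_iso_hi : lie_isomorphic (gA l m 0) (h_i R).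
Proof.
exists P_i; split; first exact: P_i_unit.
rewrite /h_i /hplusR /P_i; mx8_lie_morph lie_gA.
Qed.

Definition P_ii : 'M[R]_8 := mx8
  [:: [:: 0; m; 0; 0; 0; 0; 0; 0];
      [:: 0; 0; m ^+ 2; 0; 0; 0; 0; 0];
      [:: 0; 0; 0; m ^+ 2; 0; 0; 0; 0];
      [:: 0; 0; 0; 0; 0; 0; 0; 1];
      [:: 0; 0; 0; 0; 0; 0; m ^+ 3; 0];
      [:: 0; 0; 0; 0; 0; m ^+ 2; 0; 0];
      [:: 0; 0; 0; 0; - m ^+ 2; 0; 0; 0];
      [:: l * m; 0; 0; 0; 0; 0; 0; 0]].

Lemma P_ii_unit : P_ii \in unitmx.
Proof.
suff : P_ii *m mx8
  [:: [:: 0; 0; 0; 0; 0; 0; 0; (l * m)^-1];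
      [:: m^-1; 0; 0; 0; 0; 0; 0; 0];
      [:: 0; m ^- 2; 0; 0; 0; 0; 0; 0];
      [:: 0; 0; m ^- 2; 0; 0; 0; 0; 0];
      [:: 0; 0; 0; 0; 0; 0; - m ^- 2; 0];
      [:: 0; 0; 0; 0; 0; m ^- 2; 0; 0];
      [:: 0; 0; 0; 0; m ^- 3; 0; 0; 0];
      [:: 0; 0; 0; 1; 0; 0; 0; 0]] = 1%:M by case/mulmx1_unit.
mx8_mul_inverse.
Qed.

Lemma gA_iso_hii : lie_isomorphic (gA l m (-1)) (h_ii R).
Proof.
exists P_ii; split; first exact: P_ii_unit.
rewrite /h_ii /hplusR /P_ii; mx8_lie_morph lie_gA.
Qed.

Definition P_iv : 'M[R]_8 := mx8
  [:: [:: 0; m; 0; 0; 0; 0; 0; 0];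
      [:: 0; 0; m ^+ 2; 0; 0; 0; 0; 0];
      [:: 0; 0; 0; m ^+ 2; 0; 0; 0; 0];
      [:: 0; 0; 0; 0; 0; 0; 0; 1];
      [:: 0; 0; 0; 0; 0; 0; m ^+ 3; 0];
      [:: 0; 0; 0; 0; 0; - m ^+ 2; 0; 0];
      [:: 0; 0; 0; 0; - m ^+ 2; 0; 0; 0];
      [:: l * m; 0; 0; 0; 0; 0; 0; 0]].

Lemma P_iv_unit : P_iv \in unitmx.
Proof.
suff : P_iv *m mx8
  [:: [:: 0; 0; 0; 0; 0; 0; 0; (l * m)^-1];
      [:: m^-1; 0; 0; 0; 0; 0; 0; 0];
      [:: 0; m ^- 2; 0; 0; 0; 0; 0; 0];
      [:: 0; 0; m ^- 2; 0; 0; 0; 0; 0];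
      [:: 0; 0; 0; 0; 0; 0; - m ^- 2; 0];
      [:: 0; 0; 0; 0; 0; - m ^- 2; 0; 0];
      [:: 0; 0; 0; 0; m ^- 3; 0; 0; 0];
      [:: 0; 0; 0; 1; 0; 0; 0; 0]] = 1%:M by case/mulmx1_unit.
mx8_mul_inverse.
Qed.

Lemma gA_iso_hiv : lie_isomorphic (gA l m 1) (h_iv R).
Proof.
exists P_iv; split; first exact: P_iv_unit.
rewrite /h_iv /hplusR /P_iv; mx8_lie_morph lie_gA.
Qed.

Definition P_iii : 'M[R]_8 := mx8
  [:: [:: 0; m; 0; 0; 0; 0; 0; 0];
      [:: 0; 0; m ^+ 2; 0; 0; 0; - k * m ^+ 3; 0];
      [:: 0; 0; 0; m ^+ 2; 0; 0; 0; 0];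
      [:: 0; 0; 0; 0; 0; 0; 0; 1];
      [:: 0; 0; 0; 0; 0; 0; m ^+ 3; 0];
      [:: 0; 0; 0; 0; - m ^+ 2; 0; 0; 0];
      [:: 0; 0; 0; 0; 0; m ^+ 2; 0; 0];
      [:: l * m; 0; 0; 0; 0; 0; 0; 0]].

Lemma P_iii_unit : P_iii \in unitmx.
Proof.
suff : P_iii *m mx8
  [:: [:: 0; 0; 0; 0; 0; 0; 0; (l * m)^-1];
      [:: m^-1; 0; 0; 0; 0; 0; 0; 0];
      [:: 0; m ^- 2; 0; 0; k / m ^+ 2; 0; 0; 0];
      [:: 0; 0; m ^- 2; 0; 0; 0; 0; 0];
      [:: 0; 0; 0; 0; 0; - m ^- 2; 0; 0];
      [:: 0; 0; 0; 0; 0; 0; m ^- 2; 0];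
      [:: 0; 0; 0; 0; m ^- 3; 0; 0; 0];
      [:: 0; 0; 0; 1; 0; 0; 0; 0]] = 1%:M by case/mulmx1_unit.
mx8_mul_inverse.
Qed.

Lemma gB_iso_hiii : lie_isomorphic (gB l m 1 (- (k * l))) (h_iii R).
Proof.
exists P_iii; split; first exact: P_iii_unit.
rewrite /h_iii /hplusR /P_iii; mx8_lie_morph lie_gB.
Qed.

Definition P_v : 'M[R]_8 := mx8
  [:: [:: 0; m; 0; 0; 0; 0; 0; 0];
      [:: 0; 0; m ^+ 2; 0; 0; 0; k * m ^+ 3; 0];
      [:: 0; 0; 0; m ^+ 2; 0; 0; 0; 0];
      [:: 0; 0; 0; 0; 0; 0; 0; 1];
      [:: 0; 0; 0; 0; 0; 0; m ^+ 3; 0];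
      [:: 0; 0; 0; 0; - m ^+ 2; 0; 0; 0];
      [:: 0; 0; 0; 0; 0; m ^+ 2; 0; 0];
      [:: l * m; 0; 0; 0; 0; 0; 0; 0]].

Lemma P_v_unit : P_v \in unitmx.
Proof.
suff : P_v *m mx8
  [:: [:: 0; 0; 0; 0; 0; 0; 0; (l * m)^-1];
      [:: m^-1; 0; 0; 0; 0; 0; 0; 0];
      [:: 0; m ^- 2; 0; 0; - k / m ^+ 2; 0; 0; 0];
      [:: 0; 0; m ^- 2; 0; 0; 0; 0; 0];
      [:: 0; 0; 0; 0; 0; - m ^- 2; 0; 0];
      [:: 0; 0; 0; 0; 0; 0; m ^- 2; 0];
      [:: 0; 0; 0; 0; m ^- 3; 0; 0; 0];
      [:: 0; 0; 0; 1; 0; 0; 0; 0]] = 1%:M by case/mulmx1_unit.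
mx8_mul_inverse.
Qed.

Lemma gB_iso_hv : lie_isomorphic (gB l m (-1) (k * l)) (h_v R).
Proof.
exists P_v; split; first exact: P_v_unit.
rewrite /h_v /hplusR /P_v; mx8_lie_morph lie_gB.
Qed.

End Isomorphisms.

Theorem theorem7p4 (R : realType) (lambda mu k : R) :
  lambda != 0 -> mu != 0 ->
  [/\ conclusion (g_i lambda mu) (@h_i R),
      conclusion (g_ii lambda mu) (@h_ii R),
      conclusion (g_iii lambda mu k) (@h_iii R),
      conclusion (g_iv lambda mu) (@h_iv R) &
      conclusion (g_v lambda mu k) (@h_v R)].
Proof.
move=> l_neq0 m_neq0; rewrite g_iE g_iiE g_iiiE g_ivE g_vE; split.
- exact: (gA_conclusion l_neq0 m_neq0 (gA_iso_hi l_neq0 m_neq0)).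
- exact: (gA_conclusion l_neq0 m_neq0 (gA_iso_hii l_neq0 m_neq0)).
- exact: (gB_conclusion l_neq0 m_neq0 (gB_iso_hiii k l_neq0 m_neq0)).
- exact: (gA_conclusion l_neq0 m_neq0 (gA_iso_hiv l_neq0 m_neq0)).
- exact: (gB_conclusion l_neq0 m_neq0 (gB_iso_hv k l_neq0 m_neq0)).
Qed.
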